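(* Let $\Lambda,\hat x,\mathcal R,V$ be as in the context and let $[u]\in\dot{\mathcal H}^1$ satisfy $u(L_\Lambda x)=u(x)$ for all $x\in\Lambda$. Let $f_u=-\mathrm{div}_{\mathcal R}(\nabla^2V(0)[D_{\mathcal R}u])$. Then, provided the respective sums converge absolutely, $$\sum_{x\in\Lambda}f_u(x)=0,\qquad\sum_{x\in\Lambda}f_u(x)\,x=0,\qquad\sum_{x\in\Lambda}f_u(x)\,x\otimes x=c\,\mathrm{Id}\ \text{ for some }c\in\mathbb{R}.$$
   Context: $\Lambda=A_\Lambda\mathbb{Z}^2$ is the square lattice ($A_\Lambda=\mathrm{Id}$) or triangular lattice ($A_\Lambda=\begin{pmatrix}1&\frac12\\0&\frac{\sqrt3}{2}\end{pmatrix}$); $Q_\Lambda$ is the rotation through $\pi/2$ (square) or $2\pi/3$ (triangular). $\hat x\in\mathbb{R}^2\setminus\Lambda$ is the centre of a unit square with vertices in $\Lambda$ (square) or the centroid of an equilateral triangle of side $1$ with vertices in $\Lambda$ (triangular), and $L_\Lambda x=Q_\Lambda(x-\hat x)+\hat x$ (so $L_\Lambda\Lambda=\Lambda$). $\mathcal R\subset\Lambda\setminus\{0\}$ is finite with $\mathrm{span}_\mathbb{Z}\mathcal R=\Lambda$ and $Q_\Lambda\mathcal R=\mathcal R$. $V\in C^6(\mathbb{R}^{\mathcal R},\mathbb{R})$ with $V(A)=V((A_{Q_\Lambda\rho})_{\rho\in\mathcal R})$, periodic with minimal period $p>0$ in each component, and lattice stable ($\exists c_0>0$: $\sum_x\sum_{\rho,\sigma}\nabla^2V(0)_{\rho\sigma}D_\rho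 vD_\sigma v\ge c_0\|D_{\mathcal R}v\|^2_{\ell^2}$ for all $v\in\dot{\mathcal H}^1$). $D_\rho u(x)=u(x+\rho)-u(x)$, $D_{\mathcal R}u=(D_\rho u)_{\rho\in\mathcal R}$, $\mathrm{div}_{\mathcal R}g(x)=-\sum_\rho(g_\rho(x-\rho)-g_\rho(x))$, and $\dot{\mathcal H}^1=\{u:\Lambda\to\mathbb{R}:D_{\mathcal R}u\in\ell^2(\Lambda)\}/\mathbb{R}$. *)

From Stdlib Require Import Reals ZArith List.
From Coquelicot Require Import Coquelicot.
Open Scope R_scope.

Inductive lattice_kind := Square | Triangular.

(** Lattice points are encoded by their integer coordinates z = (m,n),
    representing the point A_Lambda z of R^2. *)
Definition emb (k : lattice_kind) (z : Z * Z) : R * R :=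
  match k with
  | Square => (IZR (fst z), IZR (snd z))
  | Triangular => (IZR (fst z) + IZR (snd z) / 2, IZR (snd z) * sqrt 3 / 2)
  end.

Definition in_lattice (k : lattice_kind) (p : R * R) : Prop :=
  exists z : Z * Z, emb k z = p.

(** Q_Lambda: rotation through pi/2 (square) or 2 pi/3 (triangular). *)
Definition Qrot (k : lattice_kind) (p : R * R) : R * R :=
  match k with
  | Square => (- snd p, fst p)
  | Triangular => (- (1/2) * fst p - (sqrt 3 / 2) * snd p,
                   (sqrt 3 / 2) * fst p - (1/2) * snd p)
  end.

Definition padd (p q : R * R) : R * R := (fst p + fst q, snd p + snd q).
Definition psub (p q : R * R) : R * R := (fst p - fst q, snd p - snd q).
Definition pscal (c : R) (p : R * R) : R * R := (c * fst p, c * snd p).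
Definition sqdist (p q : R * R) : R := (fst p - fst q)^2 + (snd p - snd q)^2.
Definition rot90 (p : R * R) : R * R := (- snd p, fst p).

Definition is_centre (k : lattice_kind) (xh : R * R) : Prop :=
  match k with
  | Square =>
      exists p e : R * R,
        in_lattice k p /\ fst e ^ 2 + snd e ^ 2 = 1 /\
        in_lattice k (padd p e) /\ in_lattice k (padd p (rot90 e)) /\
        in_lattice k (padd (padd p e) (rot90 e)) /\
        xh = padd p (pscal (1/2) (padd e (rot90 e)))
  | Triangular =>
      exists p q r : R * R,
        in_lattice k p /\ in_lattice k q /\ in_lattice k r /\
        sqdist p q = 1 /\ sqdist q r = 1 /\ sqdist r p = 1 /\
        xh = pscal (1/3) (padd (padd p q) r)
  end.

Definition Lmap (k : lattice_kind) (xh p : R * R) : R * R :=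
  padd (Qrot k (psub p xh)) xh.

Definition zadd (a b : Z * Z) : Z * Z := ((fst a + fst b)%Z, (snd a + snd b)%Z).
Definition zsub (a b : Z * Z) : Z * Z := ((fst a - fst b)%Z, (snd a - snd b)%Z).
Definition zeqb (a b : Z * Z) : bool := (Z.eqb (fst a) (fst b) && Z.eqb (snd a) (snd b))%bool.

(** Finite sums over the finite set R (given as a duplicate-free list). *)
Definition sumR (Rs : list (Z * Z)) (F : Z * Z -> R) : R :=
  fold_right Rplus 0 (map F Rs).

Definition Zspan_full (Rs : list (Z * Z)) : Prop :=
  forall z : Z * Z, exists c : Z * Z -> Z,
    z = fold_right zadd (0%Z, 0%Z)
          (map (fun r => ((c r * fst r)%Z, (c r * snd r)%Z)) Rs).

(** Sums over Lambda, indexed by Z^2, via square boxes [-N,N]^2. *)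
Definition zrange (N : nat) : list Z :=
  map (fun k => (Z.of_nat k - Z.of_nat N)%Z) (seq 0 (2 * N + 1)).
Definition box (N : nat) : list (Z * Z) := list_prod (zrange N) (zrange N).
Definition box_sum (a : Z * Z -> R) (N : nat) : R :=
  fold_right Rplus 0 (map a (box N)).

Definition abs_summable (a : Z * Z -> R) : Prop :=
  exists M : R, forall N : nat, box_sum (fun z => Rabs (a z)) N <= M.

(** "sum_{x in Lambda} a(x) = s" (for absolutely summable families this is
    the unconditional sum) *)
Definition has_sum (a : Z * Z -> R) (s : R) : Prop :=
  is_lim_seq (fun N => box_sum a N) s.

(** the value of the sum (meaningful when it converges) *)
Definition lsum (a : Z * Z -> R) : R := real (Lim_seq (fun N => box_sum a N)).

(** Functions on R^R: represented as functions on (Z*Z -> R) that depend only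
    on the coordinates indexed by Rs. *)
Definition upd (A : Z * Z -> R) (rho : Z * Z) (t : R) : Z * Z -> R :=
  fun z => if zeqb z rho then A z + t else A z.

Definition partial (rho : Z * Z) (f : (Z * Z -> R) -> R) : (Z * Z -> R) -> R :=
  fun A => Derive (fun t => f (upd A rho t)) 0.

Definition contR (Rs : list (Z * Z)) (f : (Z * Z -> R) -> R) : Prop :=
  forall A (eps : R), 0 < eps -> exists delta : R, 0 < delta /\
    forall B, (forall rho, In rho Rs -> Rabs (B rho - A rho) < delta) ->
      Rabs (f B - f A) < eps.

(** C^k(R^R) via continuous partial derivatives up to order k *)
Fixpoint Ck (Rs : list (Z * Z)) (k : nat) (f : (Z * Z -> R) -> R) : Prop :=
  match k with
  | O => contR Rs f
  | S k' => contR Rs f /\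
      (forall rho, In rho Rs -> forall A, ex_derive (fun t => f (upd A rho t)) 0) /\
      (forall rho, In rho Rs -> Ck Rs k' (partial rho f))
  end.

Definition hess (V : (Z * Z -> R) -> R) (rho sigma : Z * Z) : R :=
  partial rho (partial sigma V) (fun _ => 0).

Definition Dfd (rho : Z * Z) (u : Z * Z -> R) (x : Z * Z) : R :=
  u (zadd x rho) - u x.

Definition divR (Rs : list (Z * Z)) (g : Z * Z -> Z * Z -> R) (x : Z * Z) : R :=
  - sumR Rs (fun rho => g rho (zsub x rho) - g rho x).

Definition f_u (Rs : list (Z * Z)) (V : (Z * Z -> R) -> R) (u : Z * Z -> R)
  : Z * Z -> R :=
  fun x => - divR Rs (fun rho y => sumR Rs (fun sigma => hess V rho sigma * Dfd sigma u y)) x.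

Definition in_H1 (Rs : list (Z * Z)) (u : Z * Z -> R) : Prop :=
  forall rho, In rho Rs -> abs_summable (fun x => (Dfd rho u x) ^ 2).

Definition admissible_R (k : lattice_kind) (Rs : list (Z * Z)) : Prop :=
  NoDup Rs /\ ~ In (0%Z, 0%Z) Rs /\ Zspan_full Rs /\
  (forall rho, In rho Rs -> exists sigma, In sigma Rs /\ emb k sigma = Qrot k (emb k rho)) /\
  (forall sigma, In sigma Rs -> exists rho, In rho Rs /\ emb k sigma = Qrot k (emb k rho)).

Definition admissible_V (k : lattice_kind) (Rs : list (Z * Z))
  (V : (Z * Z -> R) -> R) : Prop :=
  (* V is a function on R^R *)
  (forall A B, (forall rho, In rho Rs -> A rho = B rho) -> V A = V B) /\
  Ck Rs 6 V /\
  (* V(A) = V((A_{Q rho})_rho) *)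
  (forall A B, (forall rho sigma, In rho Rs -> In sigma Rs ->
                 emb k sigma = Qrot k (emb k rho) -> B rho = A sigma) ->
               V A = V B) /\
  (exists p : R, 0 < p /\ forall rho, In rho Rs ->
     (forall A, V (upd A rho p) = V A) /\
     (forall q, 0 < q < p -> exists A, V (upd A rho q) <> V A)) /\
  (exists c0 : R, 0 < c0 /\ forall v : Z * Z -> R, in_H1 Rs v ->
     lsum (fun x => sumR Rs (fun rho => sumR Rs (fun sigma =>
             hess V rho sigma * Dfd rho v x * Dfd sigma v x)))
     >= c0 * lsum (fun x => sumR Rs (fun rho => (Dfd rho v x) ^ 2))).

From Stdlib Require Import Reals ZArith List.
From Coquelicot Require Import Coquelicot.
From Stdlib Require Import Lia Lra Permutation FunctionalExtensionality Classical.
Open Scope R_scope.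

(* The stress [g = hess V(0) [D u]] is square summable and [f_u = - div g], so a box sum of
   [f_u] only sees [g] on a boundary layer of the box; by Cauchy-Schwarz these layers are
   small along a subsequence of boxes, whence [sum f_u = 0].  The rotation [L] about [xh]
   maps the lattice to itself ([xh - Q xh] is a lattice vector), and the symmetries of [V]
   and [u] make [f_u] invariant under [L].  Reindexing the absolutely convergent moment sums
   by [L] gives [m = Q m] for the first moments (the translation part only contributes
   multiples of [sum f_u = 0]) and [M = Q M Q^T] for the second moments; since [Q] is a
   rotation by [pi/2] or [2 pi/3], [m = 0] and [M = c Id].  The summability of the lower
   moments follows from that of the higher ones, again by [L]-invariance and because distinct
   lattice points are at distance at least 1. *)

Lemma Zpair_eq_dec (a b : Z * Z) : {a = b} + {a <> b}.
Proof. decide equality; apply Z.eq_dec. Qed.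

Lemma sumR_cons (r : Z * Z) (l : list (Z * Z)) (F : Z * Z -> R) :
  sumR (r :: l) F = F r + sumR l F.
Proof. reflexivity. Qed.

Lemma sumR_app (l1 l2 : list (Z * Z)) (F : Z * Z -> R) :
  sumR (l1 ++ l2) F = sumR l1 F + sumR l2 F.
Proof.
  induction l1 as [|r l1 IH]; [unfold sumR; simpl; lra|].
  rewrite <- app_comm_cons, !sumR_cons, IH; lra.
Qed.

Lemma sumR_perm (l1 l2 : list (Z * Z)) (F : Z * Z -> R) :
  Permutation l1 l2 -> sumR l1 F = sumR l2 F.
Proof. intros P; unfold sumR; induction P; simpl; lra. Qed.

Lemma sumR_ext (l : list (Z * Z)) (F G : Z * Z -> R) :
  (forall x, In x l -> F x = G x) -> sumR l F = sumR l G.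
Proof.
  induction l as [|r l IH]; intros H; [reflexivity|].
  rewrite !sumR_cons, H, IH; auto; [intros; apply H|]; simpl; auto.
Qed.

Lemma sumR_plus (l : list (Z * Z)) (F G : Z * Z -> R) :
  sumR l (fun x => F x + G x) = sumR l F + sumR l G.
Proof. induction l as [|r l IH]; [unfold sumR; simpl; lra|]. rewrite !sumR_cons, IH; lra. Qed.

Lemma sumR_minus (l : list (Z * Z)) (F G : Z * Z -> R) :
  sumR l (fun x => F x - G x) = sumR l F - sumR l G.
Proof. induction l as [|r l IH]; [unfold sumR; simpl; lra|]. rewrite !sumR_cons, IH; lra. Qed.

Lemma sumR_scal (l : list (Z * Z)) (c : R) (F : Z * Z -> R) :
  sumR l (fun x => c * F x) = c * sumR l F.
Proof. induction l as [|r l IH]; [unfold sumR; simpl; lra|]. rewrite !sumR_cons, IH; lra. Qed.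

Lemma sumR_const (l : list (Z * Z)) (c : R) : sumR l (fun _ => c) = INR (length l) * c.
Proof.
  induction l as [|r l IH]; [unfold sumR; simpl; lra|].
  rewrite sumR_cons, IH; simpl length; rewrite S_INR; lra.
Qed.

Lemma sumR_le (l : list (Z * Z)) (F G : Z * Z -> R) :
  (forall x, In x l -> F x <= G x) -> sumR l F <= sumR l G.
Proof.
  induction l as [|r l IH]; intros H; [unfold sumR; simpl; lra|].
  rewrite !sumR_cons.
  assert (F r <= G r) by (apply H; simpl; auto).
  assert (sumR l F <= sumR l G) by (apply IH; intros; apply H; simpl; auto).
  lra.
Qed.

Lemma sumR_nonneg (l : list (Z * Z)) (F : Z * Z -> R) :
  (forall x, In x l -> 0 <= F x) -> 0 <= sumR l F.
Proof.
  intros H. replace 0 with (sumR l (fun _ => 0)) by (rewrite sumR_const; lra).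
  now apply sumR_le.
Qed.

Lemma Rabs_sumR_le (l : list (Z * Z)) (F : Z * Z -> R) :
  Rabs (sumR l F) <= sumR l (fun x => Rabs (F x)).
Proof.
  induction l as [|r l IH]; [unfold sumR; simpl; rewrite Rabs_R0; lra|].
  rewrite !sumR_cons. eapply Rle_trans; [apply Rabs_triang|lra].
Qed.

Lemma sumR_map (g : Z * Z -> Z * Z) (l : list (Z * Z)) (F : Z * Z -> R) :
  sumR (map g l) F = sumR l (fun x => F (g x)).
Proof. unfold sumR. now rewrite map_map. Qed.

Lemma sumR_swap (l m : list (Z * Z)) (F : Z * Z -> Z * Z -> R) :
  sumR l (fun x => sumR m (fun y => F x y)) = sumR m (fun y => sumR l (fun x => F x y)).
Proof.
  induction l as [|r l IH].
  - transitivity (sumR m (fun _ => 0)); [|now apply sumR_ext].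
    rewrite sumR_const. unfold sumR at 1; simpl; lra.
  - rewrite sumR_cons, IH, <- sumR_plus. reflexivity.
Qed.

Lemma sumR_sqr_le (l : list (Z * Z)) (F : Z * Z -> R) :
  sumR l F ^ 2 <= INR (length l) * sumR l (fun x => F x ^ 2).
Proof.
  induction l as [|r l IH]; simpl length; [unfold sumR; simpl; lra|].
  rewrite !sumR_cons, S_INR.
  set (s := sumR l F) in *; set (q := sumR l (fun x => F x ^ 2)) in *;
    set (n := INR (length l)) in *.
  assert (0 <= n) by apply pos_INR.
  assert (0 <= q) by (apply sumR_nonneg; intros; apply pow2_ge_0).
  assert (2 * F r * s * n <= q * n + n * n * F r ^ 2)
    by (assert (0 <= (n * F r - s) ^ 2) by apply pow2_ge_0; nra).
  destruct (Req_dec n 0) as [Hn|Hn].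
  - rewrite Hn in IH |- *. assert (Hs : s = 0) by nra. rewrite Hs. nra.
  - assert (2 * F r * s <= q + n * F r ^ 2).
    { apply Rmult_le_reg_r with n; lra. }
    nra.
Qed.

Definition ldiff (l2 l1 : list (Z * Z)) : list (Z * Z) :=
  filter (fun x => if in_dec Zpair_eq_dec x l1 then false else true) l2.

Lemma In_ldiff (l2 l1 : list (Z * Z)) (x : Z * Z) :
  In x (ldiff l2 l1) <-> In x l2 /\ ~ In x l1.
Proof.
  unfold ldiff. rewrite filter_In.
  destruct (in_dec Zpair_eq_dec x l1); intuition discriminate.
Qed.

Lemma NoDup_ldiff (l2 l1 : list (Z * Z)) : NoDup l2 -> NoDup (ldiff l2 l1).
Proof. apply NoDup_filter. Qed.

Lemma sumR_ldiff (l1 l2 : list (Z * Z)) (F : Z * Z -> R) :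
  NoDup l1 -> NoDup l2 -> incl l1 l2 -> sumR l2 F = sumR l1 F + sumR (ldiff l2 l1) F.
Proof.
  intros N1 N2 I. rewrite <- sumR_app. apply sumR_perm, NoDup_Permutation; auto.
  - apply NoDup_app; auto using NoDup_ldiff.
    intros x H1 H2. apply In_ldiff in H2. tauto.
  - intros x. rewrite in_app_iff, In_ldiff.
    destruct (in_dec Zpair_eq_dec x l1); intuition.
Qed.

Lemma length_ldiff (l1 l2 : list (Z * Z)) :
  NoDup l1 -> NoDup l2 -> incl l1 l2 ->
  INR (length (ldiff l2 l1)) = INR (length l2) - INR (length l1).
Proof.
  intros N1 N2 I. pose proof (sumR_ldiff l1 l2 (fun _ => 1) N1 N2 I) as E.
  rewrite !sumR_const in E. lra.
Qed.

Lemma sumR_incl_le (l1 l2 : list (Z * Z)) (F : Z * Z -> R) :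
  NoDup l1 -> NoDup l2 -> incl l1 l2 -> (forall x, In x l2 -> 0 <= F x) ->
  sumR l1 F <= sumR l2 F.
Proof.
  intros N1 N2 I H. rewrite (sumR_ldiff l1 l2) by auto.
  assert (0 <= sumR (ldiff l2 l1) F)
    by (apply sumR_nonneg; intros x Hx; apply H, (In_ldiff l2 l1 x), Hx).
  lra.
Qed.

Lemma sumR_sandwich (l0 l l2 : list (Z * Z)) (F : Z * Z -> R) :
  NoDup l0 -> NoDup l -> NoDup l2 -> incl l0 l -> incl l l2 ->
  Rabs (sumR l F - sumR l0 F) <=
  sumR l2 (fun x => Rabs (F x)) - sumR l0 (fun x => Rabs (F x)).
Proof.
  intros N0 N N2 I0 I.
  rewrite (sumR_ldiff l0 l F), (sumR_ldiff l0 l2 (fun x => Rabs (F x)))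
    by eauto using incl_tran.
  replace (sumR l0 F + sumR (ldiff l l0) F - sumR l0 F) with (sumR (ldiff l l0) F) by lra.
  eapply Rle_trans; [apply Rabs_sumR_le|].
  enough (sumR (ldiff l l0) (fun x => Rabs (F x)) <= sumR (ldiff l2 l0) (fun x => Rabs (F x)))
    by lra.
  apply sumR_incl_le; auto using NoDup_ldiff.
  - intros x. rewrite !In_ldiff. intuition.
  - intros; apply Rabs_pos.
Qed.

Lemma In_zrange (N : nat) (z : Z) :
  In z (zrange N) <-> (- Z.of_nat N <= z <= Z.of_nat N)%Z.
Proof.
  unfold zrange. rewrite in_map_iff. split.
  - intros [n [<- Hn]]. apply in_seq in Hn. lia.
  - intros H. exists (Z.to_nat (z + Z.of_nat N)). split; [lia|]. apply in_seq. lia.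
Qed.

Lemma In_box (N : nat) (z : Z * Z) :
  In z (box N) <->
  (- Z.of_nat N <= fst z <= Z.of_nat N /\ - Z.of_nat N <= snd z <= Z.of_nat N)%Z.
Proof. destruct z. unfold box. now rewrite in_prod_iff, !In_zrange. Qed.

Lemma NoDup_list_prod {A B : Type} (l : list A) (l' : list B) :
  NoDup l -> NoDup l' -> NoDup (list_prod l l').
Proof.
  intros N N'. induction N as [|a l Ha _ IH]; simpl; [constructor|].
  apply NoDup_app; auto.
  - apply FinFun.Injective_map_NoDup; auto. intros ? ? E. now inversion E.
  - intros [x y] H1 H2. apply in_map_iff in H1 as [? [E _]]. inversion E; subst.
    apply in_prod_iff in H2. tauto.
Qed.

Lemma NoDup_box (N : nat) : NoDup (box N).
Proof.
  assert (NoDup (zrange N))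
    by (apply FinFun.Injective_map_NoDup; [intros ? ? ?; lia|apply seq_NoDup]).
  now apply NoDup_list_prod.
Qed.

Lemma length_box (N : nat) : INR (length (box N)) = (2 * INR N + 1) ^ 2.
Proof.
  unfold box, zrange. rewrite length_prod, length_map, length_seq.
  rewrite mult_INR, plus_INR, mult_INR. simpl. lra.
Qed.

Lemma box_incl (N M : nat) : (N <= M)%nat -> incl (box N) (box M).
Proof. intros H z Hz. apply In_box in Hz. apply In_box. lia. Qed.

Lemma box_sum_sumR (a : Z * Z -> R) (N : nat) : box_sum a N = sumR (box N) a.
Proof. reflexivity. Qed.

Lemma box_sum_mono (a : Z * Z -> R) (N M : nat) :
  (forall x, 0 <= a x) -> (N <= M)%nat -> box_sum a N <= box_sum a M.
Proof. intros. apply sumR_incl_le; auto using NoDup_box, box_incl. Qed.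

Lemma box_sum_diff_le (a : Z * Z -> R) (m n : nat) : (m <= n)%nat ->
  Rabs (box_sum a n - box_sum a m) <=
  box_sum (fun x => Rabs (a x)) n - box_sum (fun x => Rabs (a x)) m.
Proof. intros. apply sumR_sandwich; auto using NoDup_box, box_incl, incl_refl. Qed.

Lemma incr_bounded_cauchy (P : nat -> R) (K : R) :
  (forall n m, (n <= m)%nat -> P n <= P m) -> (forall n, P n <= K) ->
  forall eps, 0 < eps -> exists n0, forall m, (n0 <= m)%nat -> P m - P n0 < eps.
Proof.
  intros Hmono HK eps Heps.
  assert (Hlim : ex_finite_lim_seq P)
    by (apply (ex_finite_lim_seq_incr P K); auto).
  apply ex_lim_seq_cauchy_corr in Hlim. destruct (Hlim (mkposreal eps Heps)) as [n0 Hn0].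
  exists n0. intros m Hm. specialize (Hn0 m n0 Hm (le_n n0)). simpl in Hn0.
  eapply Rle_lt_trans; [apply Rle_abs|exact Hn0].
Qed.

Lemma abs_summable_tail (a : Z * Z -> R) : abs_summable a ->
  forall eps, 0 < eps -> exists n0, forall m, (n0 <= m)%nat ->
  box_sum (fun x => Rabs (a x)) m - box_sum (fun x => Rabs (a x)) n0 < eps.
Proof.
  intros [K HK]. apply (incr_bounded_cauchy _ K); auto.
  intros. apply box_sum_mono; auto. intros; apply Rabs_pos.
Qed.

Lemma has_sum_of_abs_summable (a : Z * Z -> R) : abs_summable a -> exists s, has_sum a s.
Proof.
  intros Ha.
  assert (Hlim : ex_finite_lim_seq (box_sum a)).
  { apply ex_lim_seq_cauchy_corr. intros eps.
    destruct (abs_summable_tail a Ha (eps / 2)) as [n0 Hn0]; [destruct eps; simpl; lra|].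
    exists n0. intros n m Hn Hm.
    pose proof (box_sum_diff_le a n0 n Hn). pose proof (box_sum_diff_le a n0 m Hm).
    pose proof (Hn0 n Hn). pose proof (Hn0 m Hm).
    replace (box_sum a n - box_sum a m)
      with ((box_sum a n - box_sum a n0) - (box_sum a m - box_sum a n0)) by ring.
    eapply Rle_lt_trans; [apply Rabs_triang|]. rewrite Rabs_Ropp. lra. }
  destruct Hlim as [s Hs]. now exists s.
Qed.

Lemma has_sum_exhaustion (a : Z * Z -> R) (s : R) (L : nat -> list (Z * Z)) :
  abs_summable a -> has_sum a s ->
  (forall N, NoDup (L N)) -> (forall N, exists M, incl (L N) (box M)) ->
  (forall N0, exists N1, forall N, (N1 <= N)%nat -> incl (box N0) (L N)) ->
  is_lim_seq (fun N => sumR (L N) a) s.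
Proof.
  intros Ha Hs HND Hbox Hcover. apply is_lim_seq_spec. intros eps.
  destruct (abs_summable_tail a Ha (eps / 2)) as [n0 Hn0]; [destruct eps; simpl; lra|].
  apply is_lim_seq_spec in Hs.
  destruct (Hs (mkposreal (eps / 2) ltac:(destruct eps; simpl; lra))) as [n2 Hn2]; simpl in Hn2.
  set (N3 := Nat.max n0 n2). destruct (Hcover N3) as [N1 HN1].
  exists N1. intros N HN. destruct (Hbox N) as [M HM].
  set (M' := Nat.max M N3).
  assert (Hsw : Rabs (sumR (L N) a - box_sum a N3) <=
                box_sum (fun x => Rabs (a x)) M' - box_sum (fun x => Rabs (a x)) N3).
  { apply sumR_sandwich; auto using NoDup_box.
    intros z Hz. apply (box_incl M); [lia|auto]. }
  assert (box_sum (fun x => Rabs (a x)) n0 <= box_sum (fun x => Rabs (a x)) N3)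
    by (apply box_sum_mono; [intros; apply Rabs_pos|lia]).
  assert (Rabs (box_sum a N3 - s) < eps / 2) by (apply Hn2; lia).
  specialize (Hn0 M' ltac:(lia)).
  replace (sumR (L N) a - s) with ((sumR (L N) a - box_sum a N3) + (box_sum a N3 - s)) by ring.
  eapply Rle_lt_trans; [apply Rabs_triang|]. lra.
Qed.

Lemma has_sum_ext (a b : Z * Z -> R) (s : R) :
  (forall x, a x = b x) -> has_sum a s -> has_sum b s.
Proof. intros H. replace b with a; auto. now apply functional_extensionality. Qed.

Lemma has_sum_plus (a b : Z * Z -> R) (s t : R) :
  has_sum a s -> has_sum b t -> has_sum (fun x => a x + b x) (s + t).
Proof.
  intros Ha Hb. eapply is_lim_seq_ext; [|exact (is_lim_seq_plus' _ _ _ _ Ha Hb)].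
  intros N. symmetry. apply sumR_plus.
Qed.

Lemma has_sum_scal (c : R) (a : Z * Z -> R) (s : R) :
  has_sum a s -> has_sum (fun x => c * a x) (c * s).
Proof.
  intros Ha. eapply is_lim_seq_ext; [|exact (is_lim_seq_scal_l _ c _ Ha)].
  intros N. symmetry. apply sumR_scal.
Qed.

Lemma has_sum_unique (a : Z * Z -> R) (s t : R) : has_sum a s -> has_sum a t -> s = t.
Proof.
  intros Hs Ht. apply is_lim_seq_unique in Hs. apply is_lim_seq_unique in Ht.
  rewrite Hs in Ht. now injection Ht.
Qed.

Lemma abs_summable_ext (a b : Z * Z -> R) :
  (forall x, a x = b x) -> abs_summable a -> abs_summable b.
Proof. intros H. replace b with a; auto. now apply functional_extensionality. Qed.

Lemma abs_summable_plus (a b : Z * Z -> R) :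
  abs_summable a -> abs_summable b -> abs_summable (fun x => a x + b x).
Proof.
  intros [Ma Ha] [Mb Hb]. exists (Ma + Mb). intros N.
  specialize (Ha N). specialize (Hb N). rewrite box_sum_sumR in *.
  eapply Rle_trans; [apply sumR_le; intros; apply Rabs_triang|].
  rewrite sumR_plus. lra.
Qed.

Lemma abs_summable_scal (c : R) (a : Z * Z -> R) :
  abs_summable a -> abs_summable (fun x => c * a x).
Proof.
  intros [M H]. exists (Rabs c * M). intros N. rewrite box_sum_sumR in *.
  rewrite (sumR_ext _ _ (fun x => Rabs c * Rabs (a x))) by (intros; apply Rabs_mult).
  rewrite sumR_scal. apply Rmult_le_compat_l; [apply Rabs_pos|apply H].
Qed.

Lemma abs_summable_Rabs (a : Z * Z -> R) : abs_summable a -> abs_summable (fun x => Rabs (a x)).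
Proof.
  intros [M H]. exists M. intros N. rewrite box_sum_sumR in *.
  rewrite (sumR_ext _ _ (fun z => Rabs (a z))); [apply H|]. intros; apply Rabs_Rabsolu.
Qed.

Lemma abs_summable_sumR (l : list (Z * Z)) (h : Z * Z -> Z * Z -> R) :
  (forall r, In r l -> abs_summable (h r)) -> abs_summable (fun x => sumR l (fun r => h r x)).
Proof.
  induction l as [|r l IH]; intros H.
  - exists 0. intros N. rewrite box_sum_sumR, (sumR_ext _ _ (fun _ => 0)), sumR_const.
    + lra.
    + intros. unfold sumR; simpl. apply Rabs_R0.
  - apply abs_summable_plus; [apply H; simpl; auto|].
    apply IH. intros; apply H; simpl; auto.
Qed.

Lemma sumR_indicator_le (l : list (Z * Z)) (z0 : Z * Z) (c : R) :
  NoDup l -> 0 <= c -> sumR l (fun x => if Zpair_eq_dec x z0 then c else 0) <= c.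
Proof.
  intros Nl Hc. induction Nl as [|y l Hy _ IH]; [unfold sumR; simpl; lra|].
  rewrite sumR_cons. destruct (Zpair_eq_dec y z0) as [<-|]; [|lra].
  rewrite (sumR_ext l _ (fun _ => 0)), sumR_const; [lra|].
  intros x Hx. destruct (Zpair_eq_dec x y); [subst; contradiction|reflexivity].
Qed.

Lemma abs_summable_le_except_point (a b : Z * Z -> R) (z0 : Z * Z) :
  abs_summable a -> (forall x, x <> z0 -> Rabs (b x) <= Rabs (a x)) -> abs_summable b.
Proof.
  intros [M HM] Hab. exists (M + Rabs (b z0)). intros N. specialize (HM N).
  rewrite box_sum_sumR in *.
  apply Rle_trans with
    (sumR (box N) (fun x => Rabs (a x) + (if Zpair_eq_dec x z0 then Rabs (b z0) else 0))).
  - apply sumR_le. intros x _. destruct (Zpair_eq_dec x z0) as [->|Hx].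
    + pose proof (Rabs_pos (a z0)). lra.
    + specialize (Hab x Hx). lra.
  - rewrite sumR_plus.
    pose proof (sumR_indicator_le (box N) z0 (Rabs (b z0)) (NoDup_box N) (Rabs_pos _)).
    lra.
Qed.

Lemma abs_summable_le (a b : Z * Z -> R) :
  abs_summable a -> (forall x, Rabs (b x) <= Rabs (a x)) -> abs_summable b.
Proof. intros Ha Hab. apply (abs_summable_le_except_point a b (0%Z, 0%Z) Ha). auto. Qed.

Lemma abs_summable_le_except (a b : Z * Z -> R) (bad : Z * Z -> Prop) :
  abs_summable a -> (forall x y, bad x -> bad y -> x = y) ->
  (forall x, ~ bad x -> Rabs (b x) <= Rabs (a x)) -> abs_summable b.
Proof.
  intros Ha Hbad Hab. destruct (classic (exists z0, bad z0)) as [[z0 Hz0]|Hnone].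
  - apply (abs_summable_le_except_point a b z0 Ha). intros x Hx. apply Hab.
    intros Hx'. apply Hx, (Hbad x z0 Hx' Hz0).
  - apply (abs_summable_le_except_point a b (0%Z, 0%Z) Ha). intros x _. apply Hab.
    intros Hx. apply Hnone. now exists x.
Qed.

Definition box_bounded (l : Z * Z -> Z * Z) : Prop :=
  exists c D : nat, forall N z, In z (box N) -> In (l z) (box (c * N + D)).

Section Reindexing.

Variables l l' : Z * Z -> Z * Z.
Hypotheses (l'_l : forall x, l' (l x) = x) (l_l' : forall z, l (l' z) = z).
Hypotheses (l_bounded : box_bounded l) (l'_bounded : box_bounded l').

Let l_inj : FinFun.Injective l.
Proof. intros x y E. now rewrite <- (l'_l x), E, l'_l. Qed.

Let map_l_box (N : nat) : exists M, incl (map l (box N)) (box M).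
Proof.
  destruct l_bounded as [c [D H]]. exists (c * N + D)%nat.
  intros z Hz. apply in_map_iff in Hz as [x [<- Hx]]. auto.
Qed.

Lemma abs_summable_comp (a : Z * Z -> R) : abs_summable a -> abs_summable (fun x => a (l x)).
Proof.
  intros [K HK]. exists K. intros N. destruct (map_l_box N) as [M HM].
  eapply Rle_trans; [|apply (HK M)]. rewrite !box_sum_sumR.
  rewrite <- (sumR_map l (box N) (fun z => Rabs (a z))).
  apply sumR_incl_le;
    [exact (FinFun.Injective_map_NoDup l_inj (NoDup_box N))|apply NoDup_box|exact HM|].
  intros; apply Rabs_pos.
Qed.

Lemma has_sum_comp (a : Z * Z -> R) (s : R) :
  abs_summable a -> has_sum a s -> has_sum (fun x => a (l x)) s.
Proof.
  intros Ha Hs. unfold has_sum.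
  eapply is_lim_seq_ext; [|apply (has_sum_exhaustion a s (fun N => map l (box N)))]; auto.
  - intros N. simpl. rewrite box_sum_sumR. apply sumR_map.
  - intros N. exact (FinFun.Injective_map_NoDup l_inj (NoDup_box N)).
  - destruct l'_bounded as [c [D H]]. intros N0. exists (c * N0 + D)%nat.
    intros N HN z Hz. rewrite <- (l_l' z). apply in_map.
    apply (box_incl (c * N0 + D)); auto.
Qed.

End Reindexing.

(** * Lattice sums of discrete divergences *)

Definition annulus (N R : nat) : list (Z * Z) := ldiff (box (N + R)) (box (N - R)).

Lemma box_sum_annulus (a : Z * Z -> R) (N R : nat) :
  box_sum a (N + R) = box_sum a (N - R) + sumR (annulus N R) a.
Proof. apply sumR_ldiff; auto using NoDup_box. apply box_incl. lia. Qed.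

Lemma length_annulus (N R : nat) : (1 <= N)%nat -> (R <= N)%nat ->
  INR (length (annulus N R)) <= 24 * INR R * INR N.
Proof.
  intros H1 HR. unfold annulus.
  rewrite length_ldiff by (auto using NoDup_box; apply box_incl; lia).
  rewrite !length_box, plus_INR, minus_INR by exact HR.
  assert (1 <= INR N) by (apply (le_INR 1); exact H1).
  assert (0 <= INR R) by apply pos_INR.
  nra.
Qed.

Lemma box_sum_shift_diff_le (h : Z * Z -> R) (r : Z * Z) (R N : nat) :
  In r (box R) -> (R <= N)%nat ->
  Rabs (box_sum (fun x => h (zsub x r)) N - box_sum h N) <=
  2 * sumR (annulus N R) (fun x => Rabs (h x)).
Proof.
  intros Hr HN. apply In_box in Hr.
  set (A := sumR (annulus N R) (fun x => Rabs (h x))).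
  assert (Hann : A = box_sum (fun x => Rabs (h x)) (N + R) -
                     box_sum (fun x => Rabs (h x)) (N - R))
    by (unfold A; rewrite box_sum_annulus; ring).
  assert (shift_inj : FinFun.Injective (fun x => zsub x r)).
  { intros [x1 x2] [y1 y2] E. unfold zsub in E; simpl in E. injection E. intros. f_equal; lia. }
  assert (Sshift : Rabs (box_sum (fun x => h (zsub x r)) N - box_sum h (N - R)) <= A).
  { rewrite Hann, box_sum_sumR, <- sumR_map.
    apply sumR_sandwich; auto using NoDup_box, FinFun.Injective_map_NoDup.
    - intros z Hz. apply in_map_iff. exists (zadd z r). split.
      + destruct z; unfold zadd, zsub; simpl; f_equal; lia.
      + apply In_box in Hz. apply In_box. destruct z; simpl in *. lia.
    - intros z Hz. apply in_map_iff in Hz as [x [<- Hx]]. apply In_box in Hx.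
      apply In_box. destruct x; simpl in *. lia. }
  assert (Sbox : Rabs (box_sum h N - box_sum h (N - R)) <= A)
    by (rewrite Hann; apply sumR_sandwich; auto using NoDup_box; apply box_incl; lia).
  rewrite Rabs_minus_sym in Sbox.
  replace (2 * A) with (A + A) by ring.
  eapply Rle_trans; [|apply (Rplus_le_compat _ _ _ _ Sshift Sbox)].
  replace (box_sum (fun x => h (zsub x r)) N - box_sum h N)
    with ((box_sum (fun x => h (zsub x r)) N - box_sum h (N - R)) +
          (box_sum h (N - R) - box_sum h N))
    by ring.
  apply Rabs_triang.
Qed.

Lemma telescope_ge (Q : nat -> R) (c : R) (M : nat) :
  (forall j, (j < M)%nat -> c <= Q (S j) - Q j) -> INR M * c <= Q M - Q O.
Proof.
  induction M as [|M IH]; intros H; [simpl; lra|].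
  rewrite S_INR.
  assert (INR M * c <= Q M - Q O) by (apply IH; intros j Hj; apply H; lia).
  specialize (H M (Nat.lt_succ_diag_r M)). lra.
Qed.

Lemma annulus_increment_small (P : nat -> R) (K : R) (R : nat) :
  (forall n m, (n <= m)%nat -> P n <= P m) -> (forall n, P n <= K) -> (1 <= R)%nat ->
  forall delta, 0 < delta -> forall N1, exists N,
  (N1 <= N)%nat /\ (R <= N)%nat /\ (1 <= N)%nat /\ INR N * (P (N + R)%nat - P (N - R)%nat) < delta.
Proof.
  intros Hmono HK HR delta Hdelta N1. apply NNPP. intros Hno.
  assert (Hlarge : forall N, (N1 <= N)%nat -> (R <= N)%nat -> (1 <= N)%nat ->
                   delta <= INR N * (P (N + R)%nat - P (N - R)%nat)).
  { intros N H1 H2 H3. apply Rnot_lt_le. intros Hlt. apply Hno. now exists N. }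
  assert (HR1 : 1 <= INR R) by (apply (le_INR 1); exact HR).
  destruct (incr_bounded_cauchy P K Hmono HK (delta / (3 * INR R))) as [n0 Hn0].
  { apply Rdiv_lt_0_compat; lra. }
  (* [M] disjoint annuli of width [2R], all inside [box (3RM)], each carrying at least
     [delta / (3RM)] of the mass of [P] beyond [n0]. *)
  set (M := (N1 + R + n0 + 1)%nat).
  assert (HM1 : 1 <= INR M) by (apply (le_INR 1); unfold M; lia).
  set (Q := fun j => P (M - R + 2 * R * j)%nat).
  assert (Hstep : forall j, (j < M)%nat -> delta / (3 * INR R * INR M) <= Q (S j) - Q j).
  { intros j Hj. set (Nj := (M + 2 * R * j)%nat).
    replace (Q (S j)) with (P (Nj + R)%nat) by (unfold Q, Nj; f_equal; lia).
    replace (Q j) with (P (Nj - R)%nat) by (unfold Q, Nj, M; f_equal; lia).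
    assert (Hj1 : 1 <= INR Nj) by (apply (le_INR 1); unfold Nj, M; lia).
    assert (HNj : INR Nj <= 3 * INR R * INR M).
    { assert (INR Nj <= INR (3 * R * M)) by (apply le_INR; unfold Nj; nia).
      rewrite !mult_INR in H. simpl in H. lra. }
    specialize (Hlarge Nj ltac:(unfold Nj, M; lia) ltac:(unfold Nj, M; lia)
                          ltac:(unfold Nj, M; lia)).
    apply Rle_trans with (delta / INR Nj).
    - apply Rmult_le_compat_l; [lra|]. apply Rinv_le_contravar; lra.
    - apply Rmult_le_reg_l with (INR Nj); [lra|]. field_simplify; lra. }
  pose proof (telescope_ge Q _ M Hstep) as Htel.
  replace (INR M * (delta / (3 * INR R * INR M))) with (delta / (3 * INR R)) in Htel
    by (field; lra).
  assert (P n0 <= Q O) by (apply Hmono; unfold M; lia).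
  specialize (Hn0 (M - R + 2 * R * M)%nat ltac:(unfold M; lia)).
  unfold Q in *. lra.
Qed.

Lemma annulus_sum_small (G : Z * Z -> R) (R : nat) :
  (forall x, 0 <= G x) -> abs_summable (fun x => G x ^ 2) -> (1 <= R)%nat ->
  forall eps, 0 < eps -> forall N1, exists N,
  (N1 <= N)%nat /\ (R <= N)%nat /\ sumR (annulus N R) G < eps.
Proof.
  intros HG [K HK] HR eps Heps N1.
  set (P := box_sum (fun x => G x ^ 2)).
  assert (Hmono : forall n m, (n <= m)%nat -> P n <= P m)
    by (intros; apply box_sum_mono; auto; intros; apply pow2_ge_0).
  assert (HPK : forall n, P n <= K).
  { intros n. eapply Rle_trans; [|apply (HK n)]. apply sumR_le. intros x _.
    rewrite Rabs_right; [lra|apply Rle_ge, pow2_ge_0]. }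
  assert (HR1 : 1 <= INR R) by (apply (le_INR 1); exact HR).
  destruct (annulus_increment_small P K R Hmono HPK HR (eps ^ 2 / (24 * INR R))
              ltac:(apply Rdiv_lt_0_compat; nra) N1) as [N [HN1 [HRN [HN Hsmall]]]].
  exists N. split; [exact HN1|]. split; [exact HRN|].
  assert (Hsq : sumR (annulus N R) (fun x => G x ^ 2) = P (N + R)%nat - P (N - R)%nat)
    by (unfold P; rewrite box_sum_annulus; ring).
  assert (HNR : 1 <= INR N) by (apply (le_INR 1); exact HN).
  pose proof (length_annulus N R HN HRN) as Hlen.
  pose proof (sumR_sqr_le (annulus N R) G) as HCS. rewrite Hsq in HCS.
  assert (He : 0 <= P (N + R)%nat - P (N - R)%nat)
    by (assert (P (N - R)%nat <= P (N + R)%nat) by (apply Hmono; lia); lra).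
  assert (Hprod : INR N * (P (N + R)%nat - P (N - R)%nat) * (24 * INR R) < eps ^ 2).
  { apply Rmult_lt_reg_r with (/ (24 * INR R)); [apply Rinv_0_lt_compat; lra|].
    field_simplify; lra. }
  assert (0 <= sumR (annulus N R) G) by (apply sumR_nonneg; auto).
  nra.
Qed.

Lemma box_sum_div_le (Rs : list (Z * Z)) (g : Z * Z -> Z * Z -> R) (R N : nat) :
  incl Rs (box R) -> (R <= N)%nat ->
  Rabs (box_sum (fun x => sumR Rs (fun r => g r (zsub x r) - g r x)) N) <=
  2 * sumR (annulus N R) (fun x => sumR Rs (fun r => Rabs (g r x))).
Proof.
  intros HRs HN.
  rewrite box_sum_sumR, sumR_swap, (sumR_swap (annulus N R)), <- sumR_scal.
  eapply Rle_trans; [apply Rabs_sumR_le|]. apply sumR_le. intros r Hr.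
  rewrite sumR_minus. apply box_sum_shift_diff_le; auto.
Qed.

Lemma exists_box_incl (l : list (Z * Z)) : exists R, (1 <= R)%nat /\ incl l (box R).
Proof.
  induction l as [|a l [R [HR1 HR]]].
  - exists 1%nat. split; [lia|intros ? []].
  - exists (R + Z.to_nat (Z.abs (fst a) + Z.abs (snd a)))%nat. split; [lia|].
    intros z [<-|Hz]; apply In_box; [lia|]. apply HR, In_box in Hz. lia.
Qed.

Lemma has_sum_div_zero (Rs : list (Z * Z)) (g : Z * Z -> Z * Z -> R) (f : Z * Z -> R) :
  (forall x, f x = sumR Rs (fun r => g r (zsub x r) - g r x)) ->
  abs_summable (fun x => sumR Rs (fun r => Rabs (g r x)) ^ 2) ->
  abs_summable f -> has_sum f 0.
Proof.
  intros Hf Hg Habs. destruct (has_sum_of_abs_summable f Habs) as [F HF].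
  replace 0 with F; [exact HF|]. apply NNPP. intros HF0.
  assert (Heps : 0 < Rabs F / 3) by (pose proof (Rabs_pos_lt F HF0); lra).
  destruct (exists_box_incl Rs) as [R [HR1 HR]].
  pose proof HF as Hconv. apply is_lim_seq_spec in Hconv.
  destruct (Hconv (mkposreal _ Heps)) as [N0 HN0]; simpl in HN0.
  destruct (annulus_sum_small (fun x => sumR Rs (fun r => Rabs (g r x))) R)
    with (eps := Rabs F / 6) (N1 := N0) as [N [HN0N [HRN Hann]]]; auto; try lra.
  { intros x. apply sumR_nonneg. intros; apply Rabs_pos. }
  pose proof (box_sum_div_le Rs g R N HR HRN) as Hbound.
  replace (fun x => sumR Rs (fun r => g r (zsub x r) - g r x)) with f in Hbound
    by (apply functional_extensionality; intros; now rewrite Hf).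
  specialize (HN0 N HN0N).
  assert (Rabs F <= Rabs (box_sum f N - F) + Rabs (box_sum f N)).
  { replace F with (box_sum f N - (box_sum f N - F)) at 1 by ring.
    eapply Rle_trans; [apply Rabs_triang|]. rewrite Rabs_Ropp. lra. }
  lra.
Qed.

(** * Lattice geometry *)

Definition zrot (k : lattice_kind) (z : Z * Z) : Z * Z :=
  match k with
  | Square => ((- snd z)%Z, fst z)
  | Triangular => ((- fst z - snd z)%Z, fst z)
  end.

Definition zrot_inv (k : lattice_kind) (z : Z * Z) : Z * Z :=
  match k with
  | Square => (snd z, (- fst z)%Z)
  | Triangular => (snd z, (- fst z - snd z)%Z)
  end.

Lemma zrot_inv_zrot (k : lattice_kind) (z : Z * Z) : zrot_inv k (zrot k z) = z.
Proof. destruct k, z; simpl; f_equal; lia. Qed.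

Lemma zrot_zrot_inv (k : lattice_kind) (z : Z * Z) : zrot k (zrot_inv k z) = z.
Proof. destruct k, z; simpl; f_equal; lia. Qed.

Lemma zrot_inj (k : lattice_kind) : FinFun.Injective (zrot k).
Proof. intros x y E. now rewrite <- (zrot_inv_zrot k x), E, zrot_inv_zrot. Qed.

Lemma zrot_zadd (k : lattice_kind) (a b : Z * Z) : zrot k (zadd a b) = zadd (zrot k a) (zrot k b).
Proof. destruct k, a, b; unfold zadd; simpl; f_equal; lia. Qed.

Lemma zrot_zsub (k : lattice_kind) (a b : Z * Z) : zrot k (zsub a b) = zsub (zrot k a) (zrot k b).
Proof. destruct k, a, b; unfold zsub; simpl; f_equal; lia. Qed.

Lemma sqrt3_sqr : sqrt 3 ^ 2 = 3.
Proof. rewrite <- Rsqr_pow2. apply Rsqr_sqrt. lra. Qed.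

Lemma sqrt3_pos : 0 < sqrt 3.
Proof. apply sqrt_lt_R0. lra. Qed.

Lemma emb_zrot (k : lattice_kind) (z : Z * Z) : emb k (zrot k z) = Qrot k (emb k z).
Proof.
  destruct k, z as [m n]; simpl; rewrite ?minus_IZR, ?opp_IZR;
    f_equal; field_simplify; rewrite ?sqrt3_sqr; field.
Qed.

Lemma emb_zadd (k : lattice_kind) (a b : Z * Z) : emb k (zadd a b) = padd (emb k a) (emb k b).
Proof. destruct k, a, b; unfold zadd, padd; simpl; rewrite !plus_IZR; f_equal; lra. Qed.

Lemma emb_zsub (k : lattice_kind) (a b : Z * Z) : emb k (zsub a b) = psub (emb k a) (emb k b).
Proof. destruct k, a, b; unfold zsub, psub; simpl; rewrite !minus_IZR; f_equal; lra. Qed.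

Lemma emb_inj (k : lattice_kind) (x y : Z * Z) : emb k x = emb k y -> x = y.
Proof.
  pose proof sqrt3_pos.
  destruct k, x as [a b], y as [c d]; simpl; intros E; injection E; intros E2 E1.
  - apply eq_IZR in E1, E2. now subst.
  - assert (Ebd : IZR b = IZR d) by nra.
    assert (Eac : IZR a = IZR c) by lra.
    apply eq_IZR in Eac, Ebd. now subst.
Qed.

Lemma emb_sqr_norm_ge1 (k : lattice_kind) (z : Z * Z) :
  z <> (0%Z, 0%Z) -> 1 <= fst (emb k z) ^ 2 + snd (emb k z) ^ 2.
Proof.
  intros Hz. destruct z as [m n].
  assert (Hmn : (1 <= m * m + n * n /\ 1 <= m * m + m * n + n * n)%Z).
  { destruct (Z.eq_dec m 0), (Z.eq_dec n 0); subst; [congruence|nia..]. }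
  destruct k; cbn [emb fst snd].
  - destruct Hmn as [Hmn _]. apply IZR_le in Hmn. rewrite plus_IZR, !mult_IZR in Hmn. nra.
  - replace ((IZR m + IZR n / 2) ^ 2 + (IZR n * sqrt 3 / 2) ^ 2)
      with (IZR m * IZR m + IZR m * IZR n + IZR n * IZR n * ((1 + sqrt 3 ^ 2) / 4))
      by field.
    rewrite sqrt3_sqr. destruct Hmn as [_ Hmn]. apply IZR_le in Hmn.
    rewrite !plus_IZR, !mult_IZR in Hmn. lra.
Qed.

Definition Q11 (k : lattice_kind) : R := fst (Qrot k (1, 0)).
Definition Q12 (k : lattice_kind) : R := fst (Qrot k (0, 1)).
Definition Q21 (k : lattice_kind) : R := snd (Qrot k (1, 0)).
Definition Q22 (k : lattice_kind) : R := snd (Qrot k (0, 1)).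

Lemma Qrot_fst (k : lattice_kind) (p : R * R) : fst (Qrot k p) = Q11 k * fst p + Q12 k * snd p.
Proof. destruct k; unfold Q11, Q12; simpl; ring. Qed.

Lemma Qrot_snd (k : lattice_kind) (p : R * R) : snd (Qrot k p) = Q21 k * fst p + Q22 k * snd p.
Proof. destruct k; unfold Q21, Q22; simpl; ring. Qed.

Lemma Qrot_psub (k : lattice_kind) (p q : R * R) : Qrot k (psub p q) = psub (Qrot k p) (Qrot k q).
Proof. destruct k; unfold psub; simpl; f_equal; ring. Qed.

Definition tri_norm (z : Z * Z) : Z := (fst z * fst z + fst z * snd z + snd z * snd z)%Z.

Lemma sqdist_emb_tri (z w : Z * Z) :
  sqdist (emb Triangular z) (emb Triangular w) = IZR (tri_norm (zsub z w)).
Proof.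
  destruct z as [a b], w as [c d]. unfold sqdist, tri_norm, zsub. cbn [emb fst snd].
  rewrite !plus_IZR, !mult_IZR, !minus_IZR. field_simplify. rewrite sqrt3_sqr. field.
Qed.

Lemma tri_norm_zsub_comm (z w : Z * Z) : tri_norm (zsub z w) = tri_norm (zsub w z).
Proof. destruct z, w; unfold tri_norm, zsub; simpl; ring. Qed.

Lemma tri_norm_unit_bound (a : Z * Z) :
  tri_norm a = 1%Z -> (-1 <= fst a <= 1 /\ -1 <= snd a <= 1)%Z.
Proof. destruct a as [a1 a2]. unfold tri_norm; simpl. intros H. split; nia. Qed.

Lemma unit_pair_mod3 (a b : Z * Z) :
  tri_norm a = 1%Z -> tri_norm b = 1%Z -> tri_norm (zsub a b) = 1%Z ->
  exists t, (fst a + fst b - snd a - snd b = 3 * t)%Z.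
Proof.
  intros Ha Hb Hab. exists ((fst a + fst b - snd a - snd b) / 3)%Z.
  pose proof (tri_norm_unit_bound a Ha). pose proof (tri_norm_unit_bound b Hb).
  destruct a as [a1 a2], b as [b1 b2]. unfold tri_norm, zsub in *; simpl in *.
  assert (Ea1 : (a1 = -1 \/ a1 = 0 \/ a1 = 1)%Z) by lia.
  assert (Ea2 : (a2 = -1 \/ a2 = 0 \/ a2 = 1)%Z) by lia.
  assert (Eb1 : (b1 = -1 \/ b1 = 0 \/ b1 = 1)%Z) by lia.
  assert (Eb2 : (b2 = -1 \/ b2 = 0 \/ b2 = 1)%Z) by lia.
  destruct Ea1 as [-> | [-> | ->]], Ea2 as [-> | [-> | ->]],
           Eb1 as [-> | [-> | ->]], Eb2 as [-> | [-> | ->]];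
    simpl in *; (discriminate || reflexivity).
Qed.

(* Square: [xh - Q xh = (p + e) - Q p].  Triangular: with [s = p + q + r], [xh - Q xh] is
   [(s - Q s) / 3], of integer coordinates [(2 s1 + s2, s2 - s1) / 3] because [s1 = s2 mod 3]
   by [unit_pair_mod3]. *)
Lemma centre_translation (k : lattice_kind) (xh : R * R) :
  is_centre k xh -> exists d, emb k d = psub xh (Qrot k xh).
Proof.
  destruct k; cbn [is_centre].
  - intros [p [e [[zp Hp] [_ [[z1 H1] [_ [_ Hx]]]]]]].
    exists (zsub z1 (zrot Square zp)). rewrite emb_zsub, emb_zrot, Hp, H1, Hx.
    destruct p, e; unfold psub, padd, pscal, rot90; simpl; f_equal; lra.
  - intros [p [q [r [[zp <-] [[zq <-] [[zr <-] [Hpq [Hqr [Hrp ->]]]]]]]]].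
    rewrite !sqdist_emb_tri in *. apply eq_IZR in Hpq, Hqr, Hrp.
    rewrite tri_norm_zsub_comm in Hpq.
    assert (Hqr' : tri_norm (zsub (zsub zq zp) (zsub zr zp)) = 1%Z).
    { rewrite <- Hqr. f_equal. destruct zp, zq, zr; unfold zsub; simpl; f_equal; lia. }
    destruct (unit_pair_mod3 _ _ Hpq Hrp Hqr') as [t Ht].
    rewrite <- !emb_zadd.
    set (s := zadd (zadd zp zq) zr).
    assert (HT : exists T, (fst s - snd s = 3 * T)%Z)
      by (exists (t + fst zp - snd zp)%Z; unfold s, zadd, zsub in *; cbn [fst snd] in *; lia).
    destruct HT as [T Hs]. clearbody s. clear - Hs.
    exists ((fst s - T)%Z, (- T)%Z). destruct s as [s1 s2]. cbn [fst snd] in Hs.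
    apply (f_equal IZR) in Hs. rewrite minus_IZR, mult_IZR in Hs.
    unfold psub, pscal; cbn [emb Qrot fst snd]. rewrite minus_IZR, opp_IZR.
    replace (IZR s1) with (IZR s2 + 3 * IZR T) by lra.
    f_equal; field_simplify; rewrite ?sqrt3_sqr; field.
Qed.

Definition Lz (k : lattice_kind) (d x : Z * Z) : Z * Z := zadd (zrot k x) d.

Definition Lz_inv (k : lattice_kind) (d z : Z * Z) : Z * Z := zrot_inv k (zsub z d).

Lemma Lz_inv_Lz (k : lattice_kind) (d x : Z * Z) : Lz_inv k d (Lz k d x) = x.
Proof.
  unfold Lz, Lz_inv. rewrite <- (zrot_inv_zrot k x) at 2. f_equal.
  destruct (zrot k x), d; unfold zadd, zsub; simpl; f_equal; lia.
Qed.

Lemma Lz_Lz_inv (k : lattice_kind) (d z : Z * Z) : Lz k d (Lz_inv k d z) = z.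
Proof.
  unfold Lz, Lz_inv. rewrite zrot_zrot_inv.
  destruct z, d; unfold zadd, zsub; simpl; f_equal; lia.
Qed.

Lemma Lz_box_bounded (k : lattice_kind) (d : Z * Z) : box_bounded (Lz k d).
Proof.
  exists 2%nat, (Z.to_nat (Z.abs (fst d) + Z.abs (snd d))).
  intros N z Hz. apply In_box in Hz. apply In_box.
  destruct k, z, d; unfold Lz, zadd; simpl in *; lia.
Qed.

Lemma Lz_inv_box_bounded (k : lattice_kind) (d : Z * Z) : box_bounded (Lz_inv k d).
Proof.
  exists 2%nat, (2 * Z.to_nat (Z.abs (fst d) + Z.abs (snd d)))%nat.
  intros N z Hz. apply In_box in Hz. apply In_box.
  destruct k, z, d; unfold Lz_inv, zsub; simpl in *; lia.
Qed.

Lemma Lmap_emb (k : lattice_kind) (xh : R * R) (d x : Z * Z) :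
  emb k d = psub xh (Qrot k xh) -> Lmap k xh (emb k x) = emb k (Lz k d x).
Proof.
  intros Hd. unfold Lz, Lmap. rewrite emb_zadd, emb_zrot, Hd, Qrot_psub.
  unfold padd, psub; simpl. f_equal; ring.
Qed.

Lemma emb_Lz_fst (k : lattice_kind) (d x : Z * Z) :
  fst (emb k (Lz k d x)) = Q11 k * fst (emb k x) + Q12 k * snd (emb k x) + fst (emb k d).
Proof. unfold Lz. rewrite emb_zadd, emb_zrot. simpl. now rewrite Qrot_fst. Qed.

Lemma emb_Lz_snd (k : lattice_kind) (d x : Z * Z) :
  snd (emb k (Lz k d x)) = Q21 k * fst (emb k x) + Q22 k * snd (emb k x) + snd (emb k d).
Proof. unfold Lz. rewrite emb_zadd, emb_zrot. simpl. now rewrite Qrot_snd. Qed.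

(** * Symmetry and decay of the linearised force *)

Lemma zeqb_true_iff (a b : Z * Z) : zeqb a b = true <-> a = b.
Proof.
  destruct a, b; unfold zeqb; simpl. rewrite Bool.andb_true_iff, !Z.eqb_eq.
  split; [intros [-> ->]; reflexivity|intros E; now injection E].
Qed.

Lemma upd_comp_inj (g : Z * Z -> Z * Z) (A : Z * Z -> R) (s : Z * Z) (t : R) :
  FinFun.Injective g ->
  (fun z => upd A (g s) t (g z)) = upd (fun z => A (g z)) s t.
Proof.
  intros Hg. apply functional_extensionality. intros z. unfold upd.
  destruct (zeqb z s) eqn:E1, (zeqb (g z) (g s)) eqn:E2; auto.
  - apply zeqb_true_iff in E1. subst. now rewrite (proj2 (zeqb_true_iff _ _) eq_refl) in E2.
  - apply zeqb_true_iff, Hg in E2. subst. now rewrite (proj2 (zeqb_true_iff _ _) eq_refl) in E1.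
Qed.

Lemma partial_comp_inj (g : Z * Z -> Z * Z) (W : (Z * Z -> R) -> R) (s : Z * Z) (B : Z * Z -> R) :
  FinFun.Injective g ->
  partial (g s) (fun A => W (fun z => A (g z))) B = partial s W (fun z => B (g z)).
Proof.
  intros Hg. unfold partial. f_equal. apply functional_extensionality. intros t.
  now rewrite upd_comp_inj.
Qed.

Lemma V_comp_zrot (k : lattice_kind) (Rs : list (Z * Z)) (V : (Z * Z -> R) -> R) :
  admissible_V k Rs V -> forall A, V A = V (fun z => A (zrot k z)).
Proof.
  intros [_ [_ [HV _]]] A. apply HV. intros r s _ _ E.
  rewrite <- emb_zrot in E. apply emb_inj in E. now subst.
Qed.

Lemma hess_zrot (k : lattice_kind) (Rs : list (Z * Z)) (V : (Z * Z -> R) -> R) (r s : Z * Z) :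
  admissible_V k Rs V -> hess V (zrot k r) (zrot k s) = hess V r s.
Proof.
  intros HV. unfold hess.
  replace (partial (zrot k s) V) with (fun B => partial s V (fun z => B (zrot k z))).
  - apply (partial_comp_inj (zrot k) (partial s V) r (fun _ => 0) (zrot_inj k)).
  - apply functional_extensionality. intros B. rewrite <- partial_comp_inj by apply zrot_inj.
    f_equal. apply functional_extensionality. intros A. symmetry. now apply (V_comp_zrot k Rs).
Qed.

Lemma In_zrot (k : lattice_kind) (Rs : list (Z * Z)) (r : Z * Z) :
  admissible_R k Rs -> In r Rs -> In (zrot k r) Rs.
Proof.
  intros [_ [_ [_ [HQ _]]]] Hr. destruct (HQ r Hr) as [s [Hs E]].
  rewrite <- emb_zrot in E. apply emb_inj in E. now subst.
Qed.

Lemma sumR_reindex (g : Z * Z -> Z * Z) (l : list (Z * Z)) (F : Z * Z -> R) :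
  NoDup l -> FinFun.Injective g -> (forall r, In r l -> In (g r) l) ->
  sumR l F = sumR l (fun r => F (g r)).
Proof.
  intros Nl Hg Hl. rewrite <- (sumR_map g l F). apply sumR_perm. symmetry.
  apply Permutation_map_same_l; [now apply FinFun.Injective_map_NoDup|].
  intros z Hz. apply in_map_iff in Hz as [r [<- Hr]]. auto.
Qed.

Definition lin_stress (Rs : list (Z * Z)) (V : (Z * Z -> R) -> R) (u : Z * Z -> R)
  (r y : Z * Z) : R :=
  sumR Rs (fun s => hess V r s * Dfd s u y).

Lemma f_u_div_form (Rs : list (Z * Z)) (V : (Z * Z -> R) -> R) (u : Z * Z -> R) (x : Z * Z) :
  f_u Rs V u x = sumR Rs (fun r => lin_stress Rs V u r (zsub x r) - lin_stress Rs V u r x).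
Proof. unfold f_u, divR. apply Ropp_involutive. Qed.

Section Invariance.

Variables (k : lattice_kind) (Rs : list (Z * Z)) (V : (Z * Z -> R) -> R) (u : Z * Z -> R).
Variable (d : Z * Z).
Hypotheses (HR : admissible_R k Rs) (HV : admissible_V k Rs V).
Hypothesis u_Lz : forall x, u (Lz k d x) = u x.

Let sumR_Rs_zrot (F : Z * Z -> R) : sumR Rs F = sumR Rs (fun r => F (zrot k r)).
Proof. apply sumR_reindex; [apply HR|apply zrot_inj|intros; now apply In_zrot]. Qed.

Let Lz_zadd (x r : Z * Z) : Lz k d (zadd x r) = zadd (Lz k d x) (zrot k r).
Proof.
  unfold Lz. rewrite zrot_zadd.
  destruct (zrot k x), (zrot k r), d; unfold zadd; simpl; f_equal; lia.
Qed.

Let Lz_zsub (x r : Z * Z) : Lz k d (zsub x r) = zsub (Lz k d x) (zrot k r).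
Proof.
  unfold Lz. rewrite zrot_zsub.
  destruct (zrot k x), (zrot k r), d; unfold zadd, zsub; simpl; f_equal; lia.
Qed.

Lemma lin_stress_Lz (r y : Z * Z) :
  lin_stress Rs V u (zrot k r) (Lz k d y) = lin_stress Rs V u r y.
Proof.
  unfold lin_stress. rewrite sumR_Rs_zrot. apply sumR_ext. intros s _.
  rewrite (hess_zrot k Rs) by exact HV. unfold Dfd.
  now rewrite <- Lz_zadd, !u_Lz.
Qed.

Lemma f_u_Lz (x : Z * Z) : f_u Rs V u (Lz k d x) = f_u Rs V u x.
Proof.
  rewrite !f_u_div_form, sumR_Rs_zrot. apply sumR_ext. intros r _.
  now rewrite <- Lz_zsub, !lin_stress_Lz.
Qed.

End Invariance.

Lemma lin_stress_sqr_summable (Rs : list (Z * Z)) (V : (Z * Z -> R) -> R) (u : Z * Z -> R) :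
  in_H1 Rs u ->
  abs_summable (fun x => sumR Rs (fun r => Rabs (lin_stress Rs V u r x)) ^ 2).
Proof.
  intros Hu.
  set (c := fun s => sumR Rs (fun r => Rabs (hess V r s))).
  set (w := fun x => sumR Rs (fun s => c s * Rabs (Dfd s u x))).
  assert (Hw : forall x, sumR Rs (fun r => Rabs (lin_stress Rs V u r x)) <= w x).
  { intros x. unfold w, c.
    apply Rle_trans
      with (sumR Rs (fun r => sumR Rs (fun s => Rabs (hess V r s) * Rabs (Dfd s u x)))).
    - apply sumR_le. intros r _. eapply Rle_trans; [apply Rabs_sumR_le|].
      apply sumR_le. intros. rewrite Rabs_mult. lra.
    - rewrite sumR_swap. apply sumR_le. intros s _. rewrite Rmult_comm, <- sumR_scal.
      apply sumR_le. intros. lra. }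
  apply (abs_summable_le
           (fun x => INR (length Rs) * sumR Rs (fun s => c s ^ 2 * Dfd s u x ^ 2))).
  - apply abs_summable_scal, abs_summable_sumR. intros s Hs.
    apply abs_summable_scal, Hu, Hs.
  - intros x.
    assert (0 <= sumR Rs (fun r => Rabs (lin_stress Rs V u r x)))
      by (apply sumR_nonneg; intros; apply Rabs_pos).
    assert (0 <= sumR Rs (fun s => c s ^ 2 * Dfd s u x ^ 2))
      by (apply sumR_nonneg; intros; apply Rmult_le_pos; apply pow2_ge_0).
    rewrite !Rabs_right
      by (apply Rle_ge; try apply pow2_ge_0; apply Rmult_le_pos; auto using pos_INR).
    specialize (Hw x).
    apply Rle_trans with (w x ^ 2); [nra|].
    eapply Rle_trans; [apply sumR_sqr_le|].
    apply Rmult_le_compat_l; [apply pos_INR|]. apply sumR_le. intros s _.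
    rewrite Rpow_mult_distr, <- (pow2_abs (Dfd s u x)). lra.
Qed.

(** * Moments of an invariant density *)

Lemma Qrot_fixed_point (k : lattice_kind) (p : R * R) : Qrot k p = p -> p = (0, 0).
Proof.
  pose proof sqrt3_sqr as H3.
  destruct k, p as [a b]; simpl; intros E; injection E; intros E2 E1; f_equal; nra.
Qed.

Lemma Qrot_invariant_form (k : lattice_kind) (a b c : R) :
  a = Q11 k * Q11 k * a + 2 * Q11 k * Q12 k * b + Q12 k * Q12 k * c ->
  c = Q21 k * Q21 k * a + 2 * Q21 k * Q22 k * b + Q22 k * Q22 k * c ->
  b = Q11 k * Q21 k * a + (Q11 k * Q22 k + Q12 k * Q21 k) * b + Q12 k * Q22 k * c ->
  a = c /\ b = 0.
Proof.
  destruct k; unfold Q11, Q12, Q21, Q22; simpl; intros E1 E2 E3; [split; lra|].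
  set (s := sqrt 3) in *.
  assert (H3 : s * s = 3) by (apply sqrt_sqrt; lra).
  clearbody s.
  assert (Hb : s * s * b = 3 * b) by (rewrite H3; ring).
  assert (Hc : s * s * c = 3 * c) by (rewrite H3; ring).
  assert (Eb : b = s * (c - a) / 6) by lra.
  assert (Hsb : s * b = (c - a) / 2).
  { rewrite Eb. replace (s * (s * (c - a) / 6)) with (s * s * (c - a) / 6) by field.
    rewrite H3. lra. }
  assert (Eac : a = c) by lra.
  split; [exact Eac|]. rewrite Eb, Eac. lra.
Qed.

Section MomentAlgebra.

Variables f X Y : Z * Z -> R.
Hypothesis f_sum : has_sum f 0.

Lemma has_sum_affine_moment (S1 S2 al be D : R) :
  has_sum (fun x => f x * X x) S1 -> has_sum (fun x => f x * Y x) S2 ->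
  has_sum (fun x => f x * (al * X x + be * Y x + D)) (al * S1 + be * S2).
Proof.
  intros H1 H2.
  pose proof (has_sum_plus _ _ _ _ (has_sum_plus _ _ _ _ (has_sum_scal al _ _ H1)
                (has_sum_scal be _ _ H2)) (has_sum_scal D _ _ f_sum)) as H.
  rewrite Rmult_0_r, Rplus_0_r in H. eapply has_sum_ext; [|exact H].
  intros x; simpl; ring.
Qed.

Lemma has_sum_bilinear_moment (a b c al be D ga de E : R) :
  has_sum (fun x => f x * X x) 0 -> has_sum (fun x => f x * Y x) 0 ->
  has_sum (fun x => f x * (X x * X x)) a -> has_sum (fun x => f x * (X x * Y x)) b ->
  has_sum (fun x => f x * (Y x * Y x)) c ->
  has_sum (fun x => f x * ((al * X x + be * Y x + D) * (ga * X x + de * Y x + E)))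
    (al * ga * a + (al * de + be * ga) * b + be * de * c).
Proof.
  intros H1 H2 H11 H12 H22.
  pose proof (has_sum_plus _ _ _ _
    (has_sum_plus _ _ _ _ (has_sum_scal (al * ga) _ _ H11)
      (has_sum_plus _ _ _ _ (has_sum_scal (al * de + be * ga) _ _ H12)
                             (has_sum_scal (be * de) _ _ H22)))
    (has_sum_plus _ _ _ _ (has_sum_scal (al * E + D * ga) _ _ H1)
      (has_sum_plus _ _ _ _ (has_sum_scal (be * E + D * de) _ _ H2)
                             (has_sum_scal (D * E) _ _ f_sum)))) as H.
  replace (al * ga * a + (al * de + be * ga) * b + be * de * c)
    with (al * ga * a + ((al * de + be * ga) * b + be * de * c) +
          ((al * E + D * ga) * 0 + ((be * E + D * de) * 0 + D * E * 0))) by ring.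
  eapply has_sum_ext; [|exact H]. intros x; simpl; ring.
Qed.

End MomentAlgebra.

Section InvariantMoments.

Variables (k : lattice_kind) (d : Z * Z) (f : Z * Z -> R).
Hypothesis f_Lz : forall x, f (Lz k d x) = f x.

Lemma abs_summable_Lz_weight (w : Z * Z -> R) :
  abs_summable (fun x => f x * w x) -> abs_summable (fun x => f x * w (Lz k d x)).
Proof.
  intros H. eapply abs_summable_ext;
    [|apply (abs_summable_comp (Lz k d) (Lz_inv k d) (Lz_inv_Lz k d) (Lz_box_bounded k d)), H].
  intros x; simpl. now rewrite f_Lz.
Qed.

Lemma moment_Lz_invariant (w w' : Z * Z -> R) (s s' : R) :
  (forall x, w (Lz k d x) = w' x) ->
  abs_summable (fun x => f x * w x) -> has_sum (fun x => f x * w x) s ->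
  has_sum (fun x => f x * w' x) s' -> s = s'.
Proof.
  intros Hw Ha Hs Hs'. apply (has_sum_unique (fun x => f x * w' x)); [|exact Hs'].
  eapply has_sum_ext;
    [|apply (has_sum_comp (Lz k d) (Lz_inv k d) (Lz_inv_Lz k d) (Lz_Lz_inv k d)
               (Lz_box_bounded k d) (Lz_inv_box_bounded k d)); eauto].
  intros x; simpl. now rewrite f_Lz, Hw.
Qed.

Lemma first_moments_zero :
  has_sum f 0 ->
  abs_summable (fun x => f x * fst (emb k x)) -> abs_summable (fun x => f x * snd (emb k x)) ->
  has_sum (fun x => f x * fst (emb k x)) 0 /\ has_sum (fun x => f x * snd (emb k x)) 0.
Proof.
  intros H0 A1 A2.
  destruct (has_sum_of_abs_summable _ A1) as [S1 H1].
  destruct (has_sum_of_abs_summable _ A2) as [S2 H2].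
  assert (E1 : S1 = Q11 k * S1 + Q12 k * S2)
    by (eapply (moment_Lz_invariant (fun x => fst (emb k x)));
        [intros x; apply emb_Lz_fst|exact A1|exact H1|];
        now apply has_sum_affine_moment).
  assert (E2 : S2 = Q21 k * S1 + Q22 k * S2)
    by (eapply (moment_Lz_invariant (fun x => snd (emb k x)));
        [intros x; apply emb_Lz_snd|exact A2|exact H2|];
        now apply has_sum_affine_moment).
  assert (Hfix : Qrot k (S1, S2) = (S1, S2)).
  { apply injective_projections; [rewrite Qrot_fst|rewrite Qrot_snd]; simpl; lra. }
  apply Qrot_fixed_point in Hfix. injection Hfix as -> ->. now split.
Qed.

Lemma second_moments_isotropic :
  has_sum f 0 ->
  has_sum (fun x => f x * fst (emb k x)) 0 -> has_sum (fun x => f x * snd (emb k x)) 0 ->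
  abs_summable (fun x => f x * fst (emb k x) * fst (emb k x)) ->
  abs_summable (fun x => f x * fst (emb k x) * snd (emb k x)) ->
  abs_summable (fun x => f x * snd (emb k x) * snd (emb k x)) ->
  exists c,
    has_sum (fun x => f x * fst (emb k x) * fst (emb k x)) c /\
    has_sum (fun x => f x * fst (emb k x) * snd (emb k x)) 0 /\
    has_sum (fun x => f x * snd (emb k x) * snd (emb k x)) c.
Proof.
  intros H0 H1 H2 A11 A12 A22.
  destruct (has_sum_of_abs_summable _ A11) as [a H11].
  destruct (has_sum_of_abs_summable _ A12) as [b H12].
  destruct (has_sum_of_abs_summable _ A22) as [c H22].
  assert (Hassoc : forall w1 w2 : Z * Z -> R, forall s,
            has_sum (fun x => f x * w1 x * w2 x) s -> has_sum (fun x => f x * (w1 x * w2 x)) s)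
    by (intros; eapply has_sum_ext; [|eassumption]; intros; simpl; ring).
  assert (Hassoc_abs : forall w1 w2 : Z * Z -> R,
            abs_summable (fun x => f x * w1 x * w2 x) ->
            abs_summable (fun x => f x * (w1 x * w2 x)))
    by (intros; eapply abs_summable_ext; [|eassumption]; intros; simpl; ring).
  pose proof (fun al be D ga de E =>
    has_sum_bilinear_moment f (fun x => fst (emb k x)) (fun x => snd (emb k x)) H0 a b c
      al be D ga de E H1 H2 (Hassoc _ _ _ H11) (Hassoc _ _ _ H12) (Hassoc _ _ _ H22)) as Hbil.
  assert (E11 : a = Q11 k * Q11 k * a + (Q11 k * Q12 k + Q12 k * Q11 k) * b + Q12 k * Q12 k * c).
  { eapply (moment_Lz_invariant (fun x => fst (emb k x) * fst (emb k x)));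
      [intros x; rewrite emb_Lz_fst; reflexivity|apply Hassoc_abs, A11|apply Hassoc, H11|].
    apply Hbil. }
  assert (E12 : b = Q11 k * Q21 k * a + (Q11 k * Q22 k + Q12 k * Q21 k) * b + Q12 k * Q22 k * c).
  { eapply (moment_Lz_invariant (fun x => fst (emb k x) * snd (emb k x)));
      [intros x; rewrite emb_Lz_fst, emb_Lz_snd; reflexivity|apply Hassoc_abs, A12|
       apply Hassoc, H12|].
    apply Hbil. }
  assert (E22 : c = Q21 k * Q21 k * a + (Q21 k * Q22 k + Q22 k * Q21 k) * b + Q22 k * Q22 k * c).
  { eapply (moment_Lz_invariant (fun x => snd (emb k x) * snd (emb k x)));
      [intros x; rewrite emb_Lz_snd; reflexivity|apply Hassoc_abs, A22|apply Hassoc, H22|].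
    apply Hbil. }
  destruct (Qrot_invariant_form k a b c) as [-> ->]; try lra.
  exists c. auto.
Qed.

End InvariantMoments.

(** * Summability of lower moments *)

Lemma emb_separated (k : lattice_kind) (x y : Z * Z) : x <> y ->
  1 <= (fst (emb k x) - fst (emb k y)) ^ 2 + (snd (emb k x) - snd (emb k y)) ^ 2.
Proof.
  intros Hxy. replace (fst (emb k x) - fst (emb k y)) with (fst (emb k (zsub x y)))
    by (rewrite emb_zsub; reflexivity).
  replace (snd (emb k x) - snd (emb k y)) with (snd (emb k (zsub x y)))
    by (rewrite emb_zsub; reflexivity).
  apply emb_sqr_norm_ge1. intros E. apply Hxy.
  destruct x, y; unfold zsub in E; simpl in E. injection E; intros. f_equal; lia.
Qed.

Section SeparatedCoordinates.

Variables U V : Z * Z -> R.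
Hypothesis UV_separated :
  forall x y, x <> y -> 1 <= (U x - U y) ^ 2 + (V x - V y) ^ 2.

(* By separation at most one point lies in the square of side [1/2] around [(p1, p2)]; off
   it, [|f| <= 4 (|f (U - p1)| + |f (V - p2)|)]. *)
Lemma abs_summable_of_coords (f : Z * Z -> R) (p1 p2 : R) :
  abs_summable (fun x => f x * (U x - p1)) -> abs_summable (fun x => f x * (V x - p2)) ->
  abs_summable f.
Proof.
  intros A1 A2.
  apply (abs_summable_le_except
           (fun x => 4 * (Rabs (f x * (U x - p1)) + Rabs (f x * (V x - p2))))
           f (fun x => Rabs (U x - p1) < 1 / 4 /\ Rabs (V x - p2) < 1 / 4)).
  - apply abs_summable_scal, abs_summable_plus; now apply abs_summable_Rabs.
  - intros x y [Hx1 Hx2] [Hy1 Hy2]. apply NNPP. intros Hxy.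
    pose proof (UV_separated x y Hxy) as Hsep.
    apply Rabs_def2 in Hx1, Hx2, Hy1, Hy2. nra.
  - intros x Hx.
    assert (Hfar : 1 / 4 <= Rabs (U x - p1) \/ 1 / 4 <= Rabs (V x - p2)).
    { apply NNPP. intros H. apply Hx. split; apply Rnot_le_lt; tauto. }
    pose proof (Rabs_pos (f x)). pose proof (Rabs_pos (U x - p1)). pose proof (Rabs_pos (V x - p2)).
    rewrite (Rabs_pos_eq (4 * _))
      by (apply Rmult_le_pos; [lra|apply Rplus_le_le_0_compat; apply Rabs_pos]).
    rewrite !Rabs_mult. destruct Hfar; nra.
Qed.

Lemma abs_summable_of_affine_pair (f : Z * Z -> R) (al be D : R) : be <> 0 ->
  abs_summable (fun x => f x * U x) ->
  abs_summable (fun x => f x * (al * U x + be * V x + D)) ->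
  abs_summable f /\ abs_summable (fun x => f x * V x).
Proof.
  intros Hbe AU AL.
  assert (AV : abs_summable (fun x => f x * (V x - - (D / be)))).
  { eapply abs_summable_ext;
      [|apply (abs_summable_plus _ _ (abs_summable_scal (/ be) _ AL)
                                     (abs_summable_scal (- al / be) _ AU))].
    intros x; simpl. field. exact Hbe. }
  assert (Af : abs_summable f).
  { apply (abs_summable_of_coords f 0 (- (D / be))); [|exact AV].
    eapply abs_summable_ext; [|exact AU]. intros x; simpl; ring. }
  split; [exact Af|].
  eapply abs_summable_ext;
    [|apply (abs_summable_plus _ _ AV (abs_summable_scal (- (D / be)) _ Af))].
  intros x; simpl; ring.
Qed.

End SeparatedCoordinates.

Lemma Q12_neq_0 (k : lattice_kind) : Q12 k <> 0.
Proof. pose proof sqrt3_pos. destruct k; unfold Q12; simpl; lra. Qed.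

Lemma Q21_neq_0 (k : lattice_kind) : Q21 k <> 0.
Proof. pose proof sqrt3_pos. destruct k; unfold Q21; simpl; lra. Qed.

Section InvariantSummability.

Variables (k : lattice_kind) (d : Z * Z) (f : Z * Z -> R).
Hypothesis f_Lz : forall x, f (Lz k d x) = f x.

Lemma abs_summable_of_fst_moment :
  abs_summable (fun x => f x * fst (emb k x)) ->
  abs_summable f /\ abs_summable (fun x => f x * snd (emb k x)).
Proof.
  intros A. apply (abs_summable_of_affine_pair _ _ (emb_separated k) f
                     (Q11 k) (Q12 k) (fst (emb k d)) (Q12_neq_0 k) A).
  eapply abs_summable_ext; [|exact (abs_summable_Lz_weight k d f f_Lz _ A)].
  intros x; simpl. now rewrite emb_Lz_fst.
Qed.

Lemma abs_summable_of_snd_moment :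
  abs_summable (fun x => f x * snd (emb k x)) ->
  abs_summable f /\ abs_summable (fun x => f x * fst (emb k x)).
Proof.
  intros A.
  assert (sep : forall x y, x <> y -> 1 <= (snd (emb k x) - snd (emb k y)) ^ 2 +
                                        (fst (emb k x) - fst (emb k y)) ^ 2)
    by (intros; rewrite Rplus_comm; now apply emb_separated).
  apply (abs_summable_of_affine_pair _ _ sep f
                     (Q22 k) (Q21 k) (snd (emb k d)) (Q21_neq_0 k) A).
  eapply abs_summable_ext; [|exact (abs_summable_Lz_weight k d f f_Lz _ A)].
  intros x; simpl. rewrite emb_Lz_snd. ring.
Qed.

End InvariantSummability.

Lemma Rabs_mult_sqr (a e : R) : Rabs (a * e * e) = Rabs a * e ^ 2.
Proof. rewrite !Rabs_mult, <- pow2_abs. ring. Qed.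

Lemma abs_summable_of_second_moments (k : lattice_kind) (f : Z * Z -> R) :
  abs_summable (fun x => f x * fst (emb k x) * fst (emb k x)) ->
  abs_summable (fun x => f x * snd (emb k x) * snd (emb k x)) ->
  abs_summable f /\ abs_summable (fun x => f x * fst (emb k x)) /\
  abs_summable (fun x => f x * snd (emb k x)).
Proof.
  intros A11 A22.
  assert (A0 : abs_summable f).
  { apply (abs_summable_le_except_point _ f (0%Z, 0%Z)
             (abs_summable_plus _ _ (abs_summable_Rabs _ A11) (abs_summable_Rabs _ A22))).
    intros x Hx. pose proof (emb_sqr_norm_ge1 k x Hx). pose proof (Rabs_pos (f x)).
    rewrite (Rabs_pos_eq (_ + _)) by (apply Rplus_le_le_0_compat; apply Rabs_pos).
    rewrite !Rabs_mult_sqr. nra. }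
  assert (Hlin : forall e : Z * Z -> R,
            abs_summable (fun x => f x * e x * e x) -> abs_summable (fun x => f x * e x)).
  { intros e A.
    apply (abs_summable_le _ _
             (abs_summable_plus _ _ (abs_summable_Rabs _ A0) (abs_summable_Rabs _ A))).
    intros x. pose proof (Rabs_pos (f x)). pose proof (Rabs_pos (e x)).
    rewrite (Rabs_pos_eq (_ + _)) by (apply Rplus_le_le_0_compat; apply Rabs_pos).
    assert (Rabs (e x) <= 1 + Rabs (e x) ^ 2) by nra.
    rewrite Rabs_mult_sqr, Rabs_mult, <- (pow2_abs (e x)). nra. }
  auto.
Qed.

Theorem theorem5p9 (k : lattice_kind) (xh : R * R) (Rs : list (Z * Z))
  (V : (Z * Z -> R) -> R) (u : Z * Z -> R) :
  is_centre k xh ->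
  admissible_R k Rs ->
  admissible_V k Rs V ->
  in_H1 Rs u ->
  (forall x y : Z * Z, emb k y = Lmap k xh (emb k x) -> u y = u x) ->
  let f := f_u Rs V u in
  (abs_summable f -> has_sum f 0) /\
  ((abs_summable (fun x => f x * fst (emb k x)) ->
      has_sum (fun x => f x * fst (emb k x)) 0) /\
   (abs_summable (fun x => f x * snd (emb k x)) ->
      has_sum (fun x => f x * snd (emb k x)) 0)) /\
  (abs_summable (fun x => f x * fst (emb k x) * fst (emb k x)) ->
   abs_summable (fun x => f x * fst (emb k x) * snd (emb k x)) ->
   abs_summable (fun x => f x * snd (emb k x) * snd (emb k x)) ->
   exists c : R,
     has_sum (fun x => f x * fst (emb k x) * fst (emb k x)) c /\
     has_sum (fun x => f x * fst (emb k x) * snd (emb k x)) 0 /\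
     has_sum (fun x => f x * snd (emb k x) * fst (emb k x)) 0 /\
     has_sum (fun x => f x * snd (emb k x) * snd (emb k x)) c).
Proof.
  intros Hc HR HV Hu Hsym f.
  destruct (centre_translation k xh Hc) as [d Hd].
  assert (u_Lz : forall x, u (Lz k d x) = u x)
    by (intros x; apply Hsym; symmetry; now apply Lmap_emb).
  assert (f_Lz : forall x, f (Lz k d x) = f x) by (intros; now apply f_u_Lz).
  assert (f_sum : abs_summable f -> has_sum f 0)
    by (apply (has_sum_div_zero Rs (lin_stress Rs V u));
        [apply f_u_div_form|now apply lin_stress_sqr_summable]).
  split; [exact f_sum|]. split; [split|].
  - intros A1. destruct (abs_summable_of_fst_moment k d f f_Lz A1) as [A0 A2].
    now apply (first_moments_zero k d f f_Lz (f_sum A0)).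
  - intros A2. destruct (abs_summable_of_snd_moment k d f f_Lz A2) as [A0 A1].
    now apply (first_moments_zero k d f f_Lz (f_sum A0)).
  - intros A11 A12 A22.
    destruct (abs_summable_of_second_moments k f A11 A22) as [A0 [A1 A2]].
    destruct (first_moments_zero k d f f_Lz (f_sum A0) A1 A2) as [H1 H2].
    destruct (second_moments_isotropic k d f f_Lz (f_sum A0) H1 H2 A11 A12 A22)
      as [c [C11 [C12 C22]]].
    exists c. repeat split; auto.
    eapply has_sum_ext; [|exact C12]. intros x; simpl; ring.
Qed.
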